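(* Consider a finite-horizon POMDP $\mathcal{M}$ in which, alongside the interaction, beliefs $\bm{b}_1,\dots,\bm{b}_T\in\Delta(\mathcal{S})$ are computed, with $\bm{b}_t$ a deterministic function (not depending on the policy parameters) of the history $(o_1,a_1,\dots,a_{t-1},o_t)$ (e.g. exact Bayesian beliefs or beliefs from an approximate belief oracle). Define the Maximum Believed Entropy objective $$\tilde J(\pi)=\mathbb{E}_{\tau_{\mathcal{B}}\sim p^\pi}\,\mathbb{E}_{\tau_{\tilde{\mathcal{S}}}\sim p(\cdot\mid\tau_{\mathcal{B}})}\big[H(d(\tau_{\tilde{\mathcal{S}}}))\big],$$ where $\tau_{\mathcal{B}}=(\bm{b}_1,\dots,\bm{b}_T)$ and, given $\tau_{\mathcal{B}}$, the believed trajectory $\tau_{\tilde{\mathcal{S}}}=(\tilde s_1,\dots,\tilde s_T)$ has probability $p(\tau_{\tilde{\mathcal{S}}}\mid\tau_{\mathcal{B}})=\prod_{t=1}^T\bm{b}_t(\tilde s_t)$. (i) If $\{\pi_\theta\}_{\theta\in\Theta}$ is a family of policies with information set $\mathcal{I}$ such that $\theta\mapsto\pi_\theta(a\mid i)$ is differentiable and strictly positive for all $a,i$, then $$\nabla_\theta\tilde J(\pi_\theta)=\mathbb{E}_{\tau\sim p^{\pi_\theta}}\,\mathbb{E}_{\tau_{\tilde{\mathcal{S}}}\sim p(\cdot\mid\tau_{\mathcal{B}})}\Big[\Big(\sum_{t=1}^{T-1}\nabla_\theta\log\pi_\theta(a_t\mid i_t)\Big)H(d(\tau_{\tilde{\mathcal{S}}}))\Big].$$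 (ii) For two policies $\pi_1,\pi_2$ with information set $\mathcal{I}$, let $\mathcal{T}_{\mathcal{B}}(\pi_1,\pi_2)$ be the set of belief trajectories with positive probability under $p^{\pi_1}$ or $p^{\pi_2}$, let $\tau^\star_{\mathcal{B}}\in\arg\max_{\tau_{\mathcal{B}}\in\mathcal{T}_{\mathcal{B}}(\pi_1,\pi_2)}\mathbb{E}_{\tau_{\tilde{\mathcal{S}}}\sim p(\cdot\mid\tau_{\mathcal{B}})}H(d(\tau_{\tilde{\mathcal{S}}}))$ and $\bar H(\tau^\star_{\mathcal{B}})=\mathbb{E}_{\tau_{\tilde{\mathcal{S}}}\sim p(\cdot\mid\tau^\star_{\mathcal{B}})}H(d(\tau_{\tilde{\mathcal{S}}}))$. Then $$|\tilde J(\pi_1)-\tilde J(\pi_2)|\le T\,\bar H(\tau^\star_{\mathcal{B}})\,d^{TV}(\pi_1,\pi_2),$$ where $d^{TV}(\pi_1,\pi_2):=\sup_{i\in\mathcal{I}}d^{TV}(\pi_1(\cdot\mid i),\pi_2(\cdot\mid i))$.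
   Context: A finite-horizon POMDP $\mathcal{M}=(\mathcal{S},\mathcal{A},\mathcal{O},\mathbb{P},\mathbb{O},T,\mu)$ has finite state, action and observation sets, transition kernel $\mathbb{P}$, observation kernel $\mathbb{O}$, horizon $T$, initial distribution $\mu$. Under a policy $\pi:\mathcal{I}\to\Delta(\mathcal{A})$: $s_1\sim\mu$, $o_t\sim\mathbb{O}(\cdot\mid s_t)$, and for $t<T$, $a_t\sim\pi(\cdot\mid i_t)$, $s_{t+1}\sim\mathbb{P}(\cdot\mid s_t,a_t)$, with $i_t$ a deterministic function of $(o_1,a_1,\dots,a_{t-1},o_t)$; $p^\pi$ is the law of the joint trajectory $\tau$ (states, actions, observations, beliefs). For a sequence $x=(x_1,\dots,x_T)$ over a finite set, $d(x)$ is its empirical distribution $d_y(x)=\frac1T\sum_t\mathbf{1}\{x_t=y\}$, $H$ is Shannon entropy (natural log), and $d^{TV}(p,q)=\frac12\sum_x|p(x)-q(x)|$. *)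

From HB Require Import structures.
From mathcomp Require Import all_boot all_order all_algebra.
From mathcomp Require Import all_classical all_reals all_analysis.
Set Implicit Arguments. Unset Strict Implicit. Unset Printing Implicit Defensive.
Import Order.TTheory GRing.Theory Num.Theory.
Import numFieldNormedType.Exports.
Local Open Scope ring_scope.
Local Open Scope classical_set_scope.

Section POMDP.
Variable R : realType.

Definition is_dist (X : finType) (p : X -> R) : Prop :=
  (forall x, 0 <= p x) /\ \sum_(x : X) p x = 1.

Definition dTV (X : finType) (p q : X -> R) : R :=
  2^-1 * \sum_(x : X) `|p x - q x|.

Definition dTV_pol (I : Type) (A : finType) (pi1 pi2 : I -> A -> R) : R :=
  sup (range (fun i => dTV (pi1 i) (pi2 i))).

Definition entropy (X : finType) (p : X -> R) : R :=
  - \sum_(x : X) (if p x == 0 then 0 else p x * ln (p x)).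

(* Horizon T = n.+1; times are 'I_n.+1 (t = 1..T) and actions are taken at
   times 'I_n (t = 1..T-1). *)
Variables (S A O : finType) (n : nat).

Notation states := {ffun 'I_n.+1 -> S}.
Notation obss := {ffun 'I_n.+1 -> O}.
Notation acts := {ffun 'I_n -> A}.

Definition empirical (x : states) (y : S) : R :=
  #|[set t | x t == y]|%:R / n.+1%:R.

(* time t as an index of 'I_n.+1, and time t+1 *)
Definition tcur (t : 'I_n) : 'I_n.+1 := widen_ord (leqnSn n) t.
Definition tnext (t : 'I_n) : 'I_n.+1 := lift ord0 t.

Definition causal_info (I : Type) (info : 'I_n -> obss -> acts -> I) : Prop :=
  forall (t : 'I_n) (os os' : obss) (as_ as' : acts),
    (forall u : 'I_n.+1, (u <= t)%N -> os u = os' u) ->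
    (forall u : 'I_n, (u < t)%N -> as_ u = as' u) ->
    info t os as_ = info t os' as'.

Definition causal_belief (bel : 'I_n.+1 -> obss -> acts -> {ffun S -> R}) : Prop :=
  forall (t : 'I_n.+1) (os os' : obss) (as_ as' : acts),
    (forall u : 'I_n.+1, (u <= t)%N -> os u = os' u) ->
    (forall u : 'I_n, (u < t)%N -> as_ u = as' u) ->
    bel t os as_ = bel t os' as'.

(* law p^pi of the joint trajectory (states, observations, actions);
   beliefs are deterministic functions of it *)
Definition traj_prob (I : Type) (mu : S -> R) (P : S -> A -> S -> R)
  (Ob : S -> O -> R) (info : 'I_n -> obss -> acts -> I) (pi : I -> A -> R)
  (ss : states) (os : obss) (as_ : acts) : R :=
  mu (ss ord0) * (\prod_(t < n.+1) Ob (ss t) (os t)) *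
  \prod_(t < n) (pi (info t os as_) (as_ t) * P (ss (tcur t)) (as_ t) (ss (tnext t))).

Definition bel_traj (bel : 'I_n.+1 -> obss -> acts -> {ffun S -> R})
  (os : obss) (as_ : acts) : {ffun 'I_n.+1 -> {ffun S -> R}} :=
  [ffun t => bel t os as_].

Definition believed_prob (B : {ffun 'I_n.+1 -> {ffun S -> R}}) (st : states) : R :=
  \prod_(t < n.+1) B t (st t).

Definition Hbar (B : {ffun 'I_n.+1 -> {ffun S -> R}}) : R :=
  \sum_(st : states) believed_prob B st * entropy (empirical st).

Definition MBE (I : Type) mu P Ob (info : 'I_n -> obss -> acts -> I)
  bel (pi : I -> A -> R) : R :=
  \sum_(ss : states) \sum_(os : obss) \sum_(as_ : acts)
    traj_prob mu P Ob info pi ss os as_ * Hbar (bel_traj bel os as_).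

Definition bel_traj_prob (I : Type) mu P Ob (info : 'I_n -> obss -> acts -> I)
  bel (pi : I -> A -> R) (B : {ffun 'I_n.+1 -> {ffun S -> R}}) : R :=
  \sum_(ss : states) \sum_(os : obss) \sum_(as_ : acts | bel_traj bel os as_ == B)
    traj_prob mu P Ob info pi ss os as_.

Definition TB (I : Type) mu P Ob (info : 'I_n -> obss -> acts -> I) bel
  (pi1 pi2 : I -> A -> R) : set {ffun 'I_n.+1 -> {ffun S -> R}} :=
  [set B | 0 < bel_traj_prob mu P Ob info bel pi1 B \/
           0 < bel_traj_prob mu P Ob info bel pi2 B].

End POMDP.

(* (i) The believed entropy Hbar of a trajectory depends only on its
   observations and actions, so J~(pi_theta) is a finite sum of products of
   the probabilities pi_theta(a_t | i_t) with theta-independent weights; the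
   product rule and (ln pi)' = pi' / pi give the likelihood-ratio form.
   (ii) Replace pi_2 by pi_1 one time step at a time.  Two consecutive hybrid
   trajectory laws differ only in the policy factor of one step, and summing
   out the later steps backwards in time (each step kernel has mass 1, the
   changed one has l1 mass at most 2 d^TV) bounds their l1 distance by
   2 d^TV(pi_1, pi_2).  Both laws have mass 1 and Hbar lies in
   [0, Hbar(tau*_B)] on their supports, so centring Hbar at Hbar(tau*_B) / 2
   gives |J~(pi_1) - J~(pi_2)| <= (T - 1) Hbar(tau*_B) d^TV(pi_1, pi_2). *)
From HB Require Import structures.
From mathcomp Require Import all_boot all_order all_algebra.
From mathcomp Require Import all_classical all_reals all_analysis.
From mathcomp Require Import zify ring lra.
Import Order.TTheory GRing.Theory Num.Theory.
Import numFieldNormedType.Exports.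
Set Implicit Arguments. Unset Strict Implicit. Unset Printing Implicit Defensive.
Local Open Scope ring_scope.
Local Open Scope classical_set_scope.

Lemma sum_triple (V : nmodType) (T1 T2 T3 : finType) (F : T1 * T2 * T3 -> V) :
  \sum_(z : T1 * T2 * T3) F z = \sum_x \sum_y \sum_z F (x, y, z).
Proof.
rewrite (pair_bigA _ (fun x y => \sum_z F (x, y, z))) /=.
by rewrite (pair_bigA _ (fun p z => F (p.1, p.2, z))); apply: eq_bigr => -[[]].
Qed.

Lemma prod_geq_ord (R : comPzRingType) n (f : 'I_n -> R) (t : 'I_n) :
  \prod_(u < n | (t <= u)%N) f u = f t * \prod_(u < n | (t < u)%N) f u.
Proof.
rewrite (bigD1 t) //=; congr (_ * _); apply: eq_bigl => u.
by rewrite [in RHS]ltn_neqAle andbC eq_sym val_eqE.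
Qed.

Lemma ord_rev_ind (n : nat) (Q : nat -> Prop) :
  Q n -> (forall t : 'I_n, Q t.+1 -> Q t) -> Q 0%N.
Proof.
move=> Qn QS; suff H m : (m <= n)%N -> Q (n - m)%N by rewrite -(subnn n); apply: H.
elim: m => [|m IH] hm; first by rewrite subn0.
have ltmn : (n - m.+1 < n)%N by lia.
have := QS (Ordinal ltmn); rewrite /= (_ : (n - m.+1).+1 = n - m)%N; last by lia.
by apply; apply: IH; lia.
Qed.

Section CenteredDifference.
Variables (R : realFieldType) (T : finType).

(* As p and q have the same mass, h can first be shifted by M / 2, and
   |h - M / 2| <= M / 2 on their supports. *)
Lemma centered_sum_le (p q h : T -> R) (M : R) :
  (forall x, 0 <= p x) -> (forall x, 0 <= q x) -> \sum_x p x = \sum_x q x ->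
  (forall x, (0 < p x) || (0 < q x) -> 0 <= h x <= M) ->
  `|\sum_x p x * h x - \sum_x q x * h x| <= M / 2 * \sum_x `|p x - q x|.
Proof.
move=> p0 q0 pq hM.
have shift : \sum_x (p x - q x) * (M / 2) = 0.
  by rewrite -mulr_suml sumrB pq subrr mul0r.
have -> : \sum_x p x * h x - \sum_x q x * h x =
          \sum_x (p x - q x) * (h x - M / 2).
  rewrite -[LHS]subr0 -[X in _ - X = _]shift -!sumrB.
  by apply: eq_bigr => x _; ring.
rewrite mulr_sumr; apply: le_trans (ler_norm_sum _ _ _) _.
apply: ler_sum => x _; rewrite normrM mulrC.
have [/hM/andP[h0 hleM]|] := boolP ((0 < p x) || (0 < q x)).
  by apply: ler_wpM2r; rewrite ?normr_ge0 // ler_norml; apply/andP; split; lra.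
rewrite negb_or -!leNgt => /andP[px qx].
have -> : p x = 0 by apply/eqP; rewrite eq_le px p0.
have -> : q x = 0 by apply/eqP; rewrite eq_le qx q0.
by rewrite subrr normr0 !mulr0.
Qed.

End CenteredDifference.

Section TotalVariation.
Variables (R : realType) (I : Type) (A : finType) (pi1 pi2 : I -> A -> R).
Hypotheses (hpi1 : forall i, is_dist (pi1 i)) (hpi2 : forall i, is_dist (pi2 i)).

Lemma dTV_le1 i : dTV (pi1 i) (pi2 i) <= 1.
Proof.
have : \sum_a `|pi1 i a - pi2 i a| <= \sum_a (pi1 i a + pi2 i a).
  apply: ler_sum => a _; apply: le_trans (ler_normB _ _) _.
  by rewrite !ger0_norm //; [exact: (proj1 (hpi2 i)) | exact: (proj1 (hpi1 i))].
by rewrite /dTV big_split /= (proj2 (hpi1 i)) (proj2 (hpi2 i)); lra.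
Qed.

Lemma dTV_ge0 i : 0 <= dTV (pi1 i) (pi2 i).
Proof. by rewrite /dTV mulr_ge0 ?invr_ge0 ?ler0n // sumr_ge0. Qed.

Lemma dTV_le_pol i : dTV (pi1 i) (pi2 i) <= dTV_pol pi1 pi2.
Proof.
apply: sup_upper_bound; last by exists i.
split; first by exists (dTV (pi1 i) (pi2 i)); exists i.
by exists 1 => _ [j _ <-]; exact: dTV_le1.
Qed.

Lemma dTV_pol_ge0 : 0 <= dTV_pol pi1 pi2.
Proof.
have [[i _]|noI] := pselect (exists i : I, True).
  exact: le_trans (dTV_ge0 i) (dTV_le_pol i).
rewrite /dTV_pol.
have -> : range (fun i => dTV (pi1 i) (pi2 i)) = set0.
  by apply/seteqP; split => // y [i _ _]; apply: noI; exists i.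
by rewrite sup0.
Qed.

Lemma sum_dist_le_dTV_pol i :
  \sum_a `|pi1 i a - pi2 i a| <= 2 * dTV_pol pi1 pi2.
Proof. by have := dTV_le_pol i; rewrite /dTV; lra. Qed.

End TotalVariation.

Section Prefixes.
Variables (S A O : finType) (n : nat).

Definition traj := ({ffun 'I_n.+1 -> S} * {ffun 'I_n.+1 -> O} * {ffun 'I_n -> A})%type.

Definition prefix_eq (k : nat) (x y : traj) : bool :=
  [forall u : 'I_n.+1, (u <= k)%N ==> (x.1.1 u == y.1.1 u) && (x.1.2 u == y.1.2 u)] &&
  [forall u : 'I_n, (u < k)%N ==> (x.2 u == y.2 u)].

Definition extend (t : 'I_n) (x : traj) (z : A * S * O) : traj :=
  ([ffun u => if u == tnext t then z.1.2 else x.1.1 u],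
   [ffun u => if u == tnext t then z.2 else x.1.2 u],
   [ffun u => if u == t then z.1.1 else x.2 u]).

Definition set_start (x : traj) (z : S * O) : traj :=
  ([ffun u => if u == ord0 then z.1 else x.1.1 u],
   [ffun u => if u == ord0 then z.2 else x.1.2 u], x.2).

Lemma tnextE (t : 'I_n) : tnext t = t.+1 :> nat.
Proof. by rewrite /tnext lift0. Qed.

Lemma eq_tnext (u : 'I_n.+1) (t : 'I_n) : (u == tnext t) = (u == t.+1 :> nat).
Proof. by rewrite -tnextE. Qed.

Lemma prefix_eq_refl k x : prefix_eq k x x.
Proof. by apply/andP; split; apply/forallP => u; rewrite !eqxx ?implybT. Qed.

Lemma prefix_eqC k x y : prefix_eq k x y = prefix_eq k y x.
Proof.
rewrite /prefix_eq; congr (_ && _); apply: eq_forallb => u.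
  by rewrite (eq_sym (x.1.1 u)) (eq_sym (x.1.2 u)).
by rewrite (eq_sym (x.2 u)).
Qed.

Lemma prefix_eq_leq k k' x y : (k' <= k)%N -> prefix_eq k x y -> prefix_eq k' x y.
Proof.
move=> lekk /andP[/forallP H1 /forallP H2]; apply/andP; split; apply/forallP => u;
  apply/implyP => hu; [apply: (implyP (H1 u)) | apply: (implyP (H2 u))]; lia.
Qed.

Lemma prefix_eq_n x y : prefix_eq n x y -> x = y.
Proof.
case: x => [[s o] a]; case: y => [[s' o'] a'] /andP[/forallP H1 /forallP H2] /=.
have es : s = s'.
  by apply/ffunP => u; have /implyP/(_ (leq_ord u))/andP[/eqP -> _] := H1 u.
have eo : o = o'.
  by apply/ffunP => u; have /implyP/(_ (leq_ord u))/andP[_ /eqP ->] := H1 u.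
have ea : a = a'.
  by apply/ffunP => u; have /implyP/(_ (ltn_ord u))/eqP -> := H2 u.
by rewrite es eo ea.
Qed.

Lemma prefix_eq_extend (t : 'I_n) x y z :
  prefix_eq t.+1 (extend t x z) y =
  prefix_eq t x y && (z == (y.2 t, y.1.1 (tnext t), y.1.2 (tnext t))).
Proof.
case: z => [[a s] o]; rewrite /extend /prefix_eq /=.
apply/idP/idP.
- move=> /andP[/forallP H1 /forallP H2].
  have := H1 (tnext t); rewrite tnextE leqnn /= !ffunE eqxx => /andP[/eqP -> /eqP ->].
  have := H2 t; rewrite leqnn /= !ffunE eqxx => /eqP ->.
  rewrite !eqxx !andbT; apply/andP; split; apply/forallP => u; apply/implyP => hu.
  + have := H1 u; rewrite !ffunE eq_tnext (_ : (u <= t.+1)%N) /=; last lia.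
    by rewrite (_ : (u == t.+1 :> nat) = false) //; apply/negbTE; lia.
  + have := H2 u; rewrite !ffunE (_ : (u < t.+1)%N) /=; last lia.
    by rewrite (_ : (u == t) = false) //; apply/negbTE; rewrite -val_eqE /=; lia.
- move=> /andP[/andP[/forallP H1 /forallP H2] /eqP [-> -> ->]].
  apply/andP; split; apply/forallP => u; apply/implyP => hu; rewrite !ffunE.
  + have [-> | ne] := eqVneq u (tnext t); first by rewrite !eqxx.
    apply: (implyP (H1 u)); move: ne; rewrite eq_tnext; lia.
  + have [-> | ne] := eqVneq u t; first by rewrite !eqxx.
    apply: (implyP (H2 u)); move: ne; rewrite -val_eqE /=; lia.
Qed.

Lemma prefix_eq_extendr (t : 'I_n) x z : prefix_eq t x (extend t x z).
Proof.
apply/andP; split; apply/forallP => u; apply/implyP => hu; rewrite !ffunE.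
- by rewrite eq_tnext (_ : (u == t.+1 :> nat) = false) ?eqxx //; apply/negbTE; lia.
- by rewrite (_ : (u == t) = false) ?eqxx //; apply/negbTE; rewrite -val_eqE /=; lia.
Qed.

Lemma prefix_eq_set_start x y z :
  prefix_eq 0 (set_start x z) y = (z == (y.1.1 ord0, y.1.2 ord0)).
Proof.
case: z => s o; rewrite /set_start /prefix_eq /=.
apply/idP/idP.
- by move=> /andP[/forallP /(_ ord0)]; rewrite /= !ffunE eqxx => /andP[/eqP -> /eqP ->].
- move=> /eqP [-> ->]; apply/andP; split; apply/forallP => // u; apply/implyP => hu.
  by rewrite !ffunE (_ : u = ord0) ?eqxx //; apply/val_inj => /=; lia.
Qed.

End Prefixes.

Section TailMass.
Variables (R : realType) (S A O : finType) (n : nat).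
Notation traj := (traj S A O n).

Definition adapted (w : 'I_n -> traj -> R) : Prop :=
  forall (t : 'I_n) x y, prefix_eq t.+1 x y -> w t x = w t y.

Definition tail_weight (w : 'I_n -> traj -> R) (k : nat) (x : traj) : R :=
  \prod_(t < n | (k <= t)%N) w t x.

Definition tail_mass (w : 'I_n -> traj -> R) (k : nat) (x : traj) : R :=
  \sum_(y | prefix_eq k x y) tail_weight w k y.

Variable w : 'I_n -> traj -> R.
Hypothesis w_adapted : adapted w.

Lemma tail_mass_extend (t : 'I_n) x :
  tail_mass w t x = \sum_z w t (extend t x z) * tail_mass w t.+1 (extend t x z).
Proof.
rewrite /tail_mass (partition_big (fun y : traj => (y.2 t, y.1.1 (tnext t), y.1.2 (tnext t)))
  xpredT) //=.
apply: eq_bigr => z _; rewrite mulr_sumr.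
under [RHS]eq_bigl => y do rewrite prefix_eq_extend.
apply: eq_big => [y | y /andP[xy /eqP yz]]; first by rewrite eq_sym.
rewrite /tail_weight prod_geq_ord; congr (_ * _).
by apply: w_adapted; rewrite prefix_eqC prefix_eq_extend xy -yz eqxx.
Qed.

Lemma tail_mass_n x : tail_mass w n x = 1.
Proof.
rewrite /tail_mass (eq_bigl (pred1 x)); last first.
  by move=> y; apply/idP/eqP => [/prefix_eq_n -> | ->] //; apply: prefix_eq_refl.
by rewrite big_pred1_eq /tail_weight big_pred0 // => t; rewrite leqNgt ltn_ord.
Qed.

Lemma tail_mass0_eq (c : 'I_n -> R) :
  (forall t x, \sum_z w t (extend t x z) = c t) ->
  forall x, tail_mass w 0 x = \prod_(t < n) c t.
Proof.
move=> hc; apply: (@ord_rev_ind n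
  (fun k => forall x, tail_mass w k x = \prod_(t < n | (k <= t)%N) c t)).
  by move=> x /=; rewrite tail_mass_n big_pred0 // => t; rewrite leqNgt ltn_ord.
move=> t /= IH x; rewrite tail_mass_extend prod_geq_ord.
by under eq_bigr => z _ do rewrite IH; rewrite -mulr_suml hc.
Qed.

Lemma tail_mass0_le (c : 'I_n -> R) :
  (forall t x, 0 <= w t x) -> (forall t, 0 <= c t) ->
  (forall t x, \sum_z w t (extend t x z) <= c t) ->
  forall x, tail_mass w 0 x <= \prod_(t < n) c t.
Proof.
move=> w0 c0 hc; apply: (@ord_rev_ind n
  (fun k => forall x, tail_mass w k x <= \prod_(t < n | (k <= t)%N) c t)).
  by move=> x /=; rewrite tail_mass_n big_pred0 // => t; rewrite leqNgt ltn_ord.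
move=> t /= IH x; rewrite tail_mass_extend prod_geq_ord.
apply: le_trans (_ : \sum_z w t (extend t x z) * \prod_(u < n | (t < u)%N) c u <= _).
  by apply: ler_sum => z _; apply: ler_wpM2l.
by rewrite -mulr_suml ler_wpM2r // prodr_ge0.
Qed.

End TailMass.

Section Entropy.
Variable R : realType.

Lemma empirical_ge0 (S : finType) n (x : {ffun 'I_n.+1 -> S}) y :
  0 <= @empirical R S n x y.
Proof. by rewrite /empirical divr_ge0. Qed.

Lemma empirical_le1 (S : finType) n (x : {ffun 'I_n.+1 -> S}) y :
  @empirical R S n x y <= 1.
Proof.
rewrite /empirical ler_pdivrMr ?ltr0Sn // mul1r ler_nat.
by rewrite -[X in (_ <= X)%N](card_ord n.+1) max_card.
Qed.

Lemma entropy_ge0 (X : finType) (p : X -> R) :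
  (forall x, 0 <= p x <= 1) -> 0 <= entropy p.
Proof.
move=> hp; rewrite /entropy oppr_ge0; apply: sumr_le0 => x _.
case: eqP => // px; have /andP[p0 p1] := hp x.
by rewrite mulr_ge0_le0 // ln_le0.
Qed.

Lemma Hbar_ge0 (S : finType) n (B : {ffun 'I_n.+1 -> {ffun S -> R}}) :
  (forall t s, 0 <= B t s) -> 0 <= Hbar B.
Proof.
move=> B0; apply: sumr_ge0 => st _; rewrite mulr_ge0 ?prodr_ge0 //.
by apply: entropy_ge0 => y; rewrite empirical_ge0 empirical_le1.
Qed.

End Entropy.

Section PathLaw.
Variables (R : realType) (S A O : finType) (n : nat).
Variables (mu : S -> R) (P : S -> A -> S -> R) (Ob : S -> O -> R).
Variables (I : Type) (info : 'I_n -> {ffun 'I_n.+1 -> O} -> {ffun 'I_n -> A} -> I).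
Hypotheses (hmu : is_dist mu) (hP : forall s a, is_dist (P s a))
  (hO : forall s, is_dist (Ob s)) (info_causal : causal_info info).
Notation traj := (traj S A O n).

Definition init_weight (x : traj) : R :=
  mu (x.1.1 ord0) * Ob (x.1.1 ord0) (x.1.2 ord0).

(* The policy may depend on the time step, as the hybrid policies below do. *)
Definition step_weight (pol : 'I_n -> I -> A -> R) (t : 'I_n) (x : traj) : R :=
  pol t (info t x.1.2 x.2) (x.2 t) * P (x.1.1 (tcur t)) (x.2 t) (x.1.1 (tnext t))
  * Ob (x.1.1 (tnext t)) (x.1.2 (tnext t)).

Definition path_prob pol (x : traj) : R :=
  init_weight x * \prod_(t < n) step_weight pol t x.

Lemma path_probE pol x :
  path_prob pol x = init_weight x * tail_weight (step_weight pol) 0 x.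
Proof. by []. Qed.

Lemma traj_prob_path pi ss os as_ :
  traj_prob mu P Ob info pi ss os as_ = path_prob (fun _ => pi) (ss, os, as_).
Proof.
rewrite /traj_prob /path_prob /init_weight /step_weight big_ord_recl /=.
by rewrite [in RHS]big_split /= /tnext; ring.
Qed.

Lemma info_prefix (t : 'I_n) (x y : traj) :
  prefix_eq t x y -> info t x.1.2 x.2 = info t y.1.2 y.2.
Proof.
move=> /andP[/forallP H1 /forallP H2]; apply: info_causal => u hu.
  by have /implyP/(_ hu)/andP[_ /eqP] := H1 u.
by have /implyP/(_ hu)/eqP := H2 u.
Qed.

Lemma step_weight_adapted pol : adapted (step_weight pol).
Proof.
move=> t x y xy; rewrite /step_weight (info_prefix (prefix_eq_leq (leqnSn t) xy)).
move: xy => /andP[/forallP H1 /forallP H2].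
have /implyP/(_ (ltnSn t))/eqP -> := H2 t.
have := H1 (tcur t); rewrite /= (leqnSn t) => /andP[/eqP -> _].
by have := H1 (tnext t); rewrite tnextE leqnn => /andP[/eqP -> /eqP ->].
Qed.

Lemma path_prob_ext pol pol' x :
  (forall t, pol t = pol' t) -> path_prob pol x = path_prob pol' x.
Proof.
by move=> e; congr (_ * _); apply: eq_bigr => t _; rewrite /step_weight e.
Qed.

Lemma sum_step_weight pol (t : 'I_n) x :
  \sum_z step_weight pol t (extend t x z) = \sum_a pol t (info t x.1.2 x.2) a.
Proof.
rewrite sum_triple; apply: eq_bigr => a _.
have tc : tcur t != tnext t by rewrite eq_tnext /=; lia.
transitivity (\sum_s \sum_o pol t (info t x.1.2 x.2) a * P (x.1.1 (tcur t)) a s * Ob s o).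
  apply: eq_bigr => s _; apply: eq_bigr => o _.
  rewrite /step_weight -(info_prefix (prefix_eq_extendr t x (a, s, o))) /extend /=.
  by rewrite !ffunE !eqxx (negbTE tc).
under eq_bigr => s _ do rewrite -mulr_sumr (proj2 (hO s)) mulr1.
by rewrite -mulr_sumr (proj2 (hP _ _)) mulr1.
Qed.

Lemma step_weight_ge0 pol t x :
  (forall i a, 0 <= pol t i a) -> 0 <= step_weight pol t x.
Proof.
by move=> pol0; rewrite /step_weight !mulr_ge0 //; [apply: (proj1 (hP _ _)) | apply: (proj1 (hO _))].
Qed.

Lemma path_prob_ge0 pol x :
  (forall t i a, 0 <= pol t i a) -> 0 <= path_prob pol x.
Proof.
move=> pol0; apply: mulr_ge0; last by apply: prodr_ge0 => t _; apply: step_weight_ge0.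
by apply: mulr_ge0; [apply: (proj1 hmu) | apply: (proj1 (hO _))].
Qed.

Lemma sum_init_tail w (x0 : traj) :
  \sum_x init_weight x * tail_weight w 0 x =
  \sum_s \sum_o mu s * Ob s o * tail_mass w 0 (set_start x0 (s, o)).
Proof.
rewrite (partition_big (fun x : traj => (x.1.1 ord0, x.1.2 ord0)) xpredT) //=.
rewrite (pair_bigA _ (fun s o => mu s * Ob s o * tail_mass w 0 (set_start x0 (s, o)))).
apply: eq_bigr => -[s o] _; rewrite /tail_mass mulr_sumr.
apply: eq_big => [y | y /eqP [<- <-] //]; first by rewrite prefix_eq_set_start eq_sym.
Qed.

Lemma sum_path_prob pol (x0 : traj) :
  (forall t i, is_dist (pol t i)) -> \sum_x path_prob pol x = 1.
Proof.
move=> hpol; under eq_bigr => x _ do rewrite path_probE.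
rewrite (sum_init_tail _ x0).
have mass1 y : tail_mass (step_weight pol) 0 y = 1.
  rewrite (tail_mass0_eq (step_weight_adapted pol) (c := fun _ => 1)) ?big1_eq // => t x.
  by rewrite sum_step_weight (proj2 (hpol _ _)).
under eq_bigr => s _ do under eq_bigr => o _ do rewrite mass1 mulr1.
under eq_bigr => s _ do rewrite -mulr_sumr (proj2 (hO s)) mulr1.
exact: (proj2 hmu).
Qed.

Variables (pi1 pi2 : I -> A -> R).
Hypotheses (hpi1 : forall i, is_dist (pi1 i)) (hpi2 : forall i, is_dist (pi2 i)).

Definition hybrid (k : nat) (t : 'I_n) : I -> A -> R :=
  if (t < k)%N then pi1 else pi2.

Definition hybrid_gap (k : nat) (t : 'I_n) : I -> A -> R :=
  if (t < k)%N then pi1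
  else if t == k :> nat then (fun i a => `|pi1 i a - pi2 i a|) else pi2.

Lemma hybrid_gap_ge0 k t i a : 0 <= hybrid_gap k t i a.
Proof.
rewrite /hybrid_gap; case: ifP => _; first exact: (proj1 (hpi1 _)).
by case: ifP => _; [apply: normr_ge0 | apply: (proj1 (hpi2 _))].
Qed.

(* Consecutive hybrids differ only in the policy factor at time k. *)
Lemma hybrid_step_diff (k : 'I_n) x :
  `|path_prob (hybrid k.+1) x - path_prob (hybrid k) x| = path_prob (hybrid_gap k) x.
Proof.
have splitk pol : path_prob pol x =
    init_weight x * step_weight pol k x * \prod_(t < n | t != k) step_weight pol t x.
  by rewrite /path_prob (bigD1 k) //= mulrA.
have off_k pol : (forall t : 'I_n, (t != k :> nat) -> pol t = hybrid_gap k t) ->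
    \prod_(t < n | t != k) step_weight pol t x =
    \prod_(t < n | t != k) step_weight (hybrid_gap k) t x.
  by move=> e; apply: eq_bigr => t tk; rewrite /step_weight e.
rewrite !splitk (off_k (hybrid k.+1)) ?(off_k (hybrid k)); first last.
- by move=> t /negbTE tk; rewrite /hybrid /hybrid_gap ltnS leq_eqVlt tk.
- by move=> t /negbTE tk; rewrite /hybrid /hybrid_gap tk.
have Q0 : 0 <= \prod_(t < n | t != k) step_weight (hybrid_gap k) t x.
  by apply: prodr_ge0 => t _; apply: step_weight_ge0 => i a; apply: hybrid_gap_ge0.
move: Q0; set Q := \prod_(t < n | t != k) _ => Q0.
rewrite /step_weight /hybrid /hybrid_gap ltnSn ltnn eqxx /=.
set i := info k x.1.2 x.2; set a := x.2 k; set PP := P _ _ _; set OO := Ob _ _.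
have PP0 : 0 <= PP by exact: (proj1 (hP _ _)).
have OO0 : 0 <= OO by exact: (proj1 (hO _)).
have I0 : 0 <= init_weight x.
  by rewrite mulr_ge0 //; [apply: (proj1 hmu) | apply: (proj1 (hO _))].
rewrite (_ : _ - _ = init_weight x * ((pi1 i a - pi2 i a) * PP * OO) * Q); last by ring.
rewrite normrM (ger0_norm Q0) normrM (ger0_norm I0).
by rewrite !normrM (ger0_norm PP0) (ger0_norm OO0).
Qed.

Lemma hybrid_step_l1_le (k : 'I_n) (x0 : traj) :
  \sum_x `|path_prob (hybrid k.+1) x - path_prob (hybrid k) x| <= 2 * dTV_pol pi1 pi2.
Proof.
under eq_bigr => x _ do rewrite hybrid_step_diff path_probE.
rewrite (sum_init_tail _ x0).
have D0 := dTV_pol_ge0 hpi1 hpi2.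
pose c (t : 'I_n) := if t == k :> nat then 2 * dTV_pol pi1 pi2 else 1.
have mass y : tail_mass (step_weight (hybrid_gap k)) 0 y <= 2 * dTV_pol pi1 pi2.
  have -> : 2 * dTV_pol pi1 pi2 = \prod_(t < n) c t.
    rewrite (bigD1 k) //= /c eqxx big1 ?mulr1 // => t tk.
    by rewrite /c (negbTE (tk : t != k :> nat)).
  apply: (tail_mass0_le (step_weight_adapted _)).
  - by move=> t z; apply: step_weight_ge0 => i a; apply: hybrid_gap_ge0.
  - by move=> t; rewrite /c; case: ifP => _; lra.
  - move=> t z; rewrite sum_step_weight /hybrid_gap /c.
    case: ltngtP => _; first by rewrite (proj2 (hpi1 _)).
      by rewrite (proj2 (hpi2 _)).
    exact: sum_dist_le_dTV_pol.
apply: le_trans (_ : \sum_s \sum_o mu s * Ob s o * (2 * dTV_pol pi1 pi2) <= _).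
  do 2!apply: ler_sum => ? _; apply: ler_wpM2l => //.
  by apply: mulr_ge0; [apply: (proj1 hmu) | apply: (proj1 (hO _))].
under eq_bigr => s _ do rewrite -mulr_suml -mulr_sumr (proj2 (hO s)) mulr1.
by rewrite -mulr_suml (proj2 hmu) mul1r.
Qed.

Lemma path_prob_l1_le (x0 : traj) :
  \sum_x `|path_prob (fun _ => pi1) x - path_prob (fun _ => pi2) x|
    <= n%:R * (2 * dTV_pol pi1 pi2).
Proof.
have telescope_hybrid x :
    path_prob (fun _ => pi1) x - path_prob (fun _ => pi2) x =
    \sum_(k < n) (path_prob (hybrid k.+1) x - path_prob (hybrid k) x).
  rewrite -(big_mkord xpredT (fun k => path_prob (hybrid k.+1) x - path_prob (hybrid k) x)).
  by rewrite telescope_sumr //; congr (_ - _); apply: path_prob_ext => t;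
    rewrite /hybrid ?ltn_ord.
apply: le_trans (_ : \sum_x \sum_(k < n)
    `|path_prob (hybrid k.+1) x - path_prob (hybrid k) x| <= _).
  by apply: ler_sum => x _; rewrite telescope_hybrid; apply: ler_norm_sum.
rewrite exchange_big /=.
apply: le_trans (ler_sum _ (fun k _ => hybrid_step_l1_le k x0)) _.
by rewrite sumr_const card_ord -[_ *+ n]mulr_natl.
Qed.

Variable bel : 'I_n.+1 -> {ffun 'I_n.+1 -> O} -> {ffun 'I_n -> A} -> {ffun S -> R}.
Hypothesis hbel : forall t os as_, is_dist (bel t os as_).

Lemma MBE_path pi :
  MBE mu P Ob info bel pi =
  \sum_x path_prob (fun _ => pi) x * Hbar (bel_traj bel x.1.2 x.2).
Proof.
rewrite [RHS]sum_triple; apply: eq_bigr => ss _; apply: eq_bigr => os _.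
by apply: eq_bigr => as_ _; rewrite traj_prob_path.
Qed.

Lemma bel_traj_prob_path pi B :
  bel_traj_prob mu P Ob info bel pi B =
  \sum_(x | bel_traj bel x.1.2 x.2 == B) path_prob (fun _ => pi) x.
Proof.
rewrite big_mkcond [RHS]sum_triple; apply: eq_bigr => ss _; apply: eq_bigr => os _.
by rewrite big_mkcond; apply: eq_bigr => as_ _ /=; rewrite traj_prob_path.
Qed.

Lemma Hbar_bel_traj_ge0 (x : traj) : 0 <= Hbar (bel_traj bel x.1.2 x.2).
Proof. by apply: Hbar_ge0 => t s; rewrite ffunE; apply: (proj1 (hbel _ _ _)). Qed.

Lemma MBE_lipschitz (Bstar : {ffun 'I_n.+1 -> {ffun S -> R}}) :
  TB mu P Ob info bel pi1 pi2 Bstar ->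
  (forall B, TB mu P Ob info bel pi1 pi2 B -> Hbar B <= Hbar Bstar) ->
  `|MBE mu P Ob info bel pi1 - MBE mu P Ob info bel pi2|
    <= n.+1%:R * Hbar Bstar * dTV_pol pi1 pi2.
Proof.
move=> TBstar Bstar_max.
pose p pi := path_prob (fun _ : 'I_n => pi).
have p_ge0 pi : (forall i, is_dist (pi i)) -> forall x, 0 <= p pi x.
  by move=> hpi x; apply: path_prob_ge0 => t i a; apply: (proj1 (hpi i)).
have p_le_bel pi x : (forall i, is_dist (pi i)) ->
    p pi x <= bel_traj_prob mu P Ob info bel pi (bel_traj bel x.1.2 x.2).
  move=> hpi; rewrite bel_traj_prob_path (bigD1 x) ?eqxx //= lerDl.
  by apply: sumr_ge0 => y _; apply: p_ge0.
have [x0 x0B] : exists x0 : traj, bel_traj bel x0.1.2 x0.2 == Bstar.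
  case: (pickP (fun x : traj => bel_traj bel x.1.2 x.2 == Bstar)) => [x hx | none].
    by exists x.
  move: TBstar; rewrite /TB /= !bel_traj_prob_path !big_pred0 // ltxx.
  by case.
have h_bound x : (0 < p pi1 x) || (0 < p pi2 x) ->
    0 <= Hbar (bel_traj bel x.1.2 x.2) <= Hbar Bstar.
  move=> px; rewrite Hbar_bel_traj_ge0; apply: Bstar_max; rewrite /TB /=.
  by case/orP: px => px; [left | right]; apply: lt_le_trans px (p_le_bel _ _ _).
have same_mass : \sum_x p pi1 x = \sum_x p pi2 x.
  by rewrite (sum_path_prob x0 (fun _ => hpi1)) (sum_path_prob x0 (fun _ => hpi2)).
have M0 : 0 <= Hbar Bstar by rewrite -(eqP x0B) Hbar_bel_traj_ge0.
have D0 := dTV_pol_ge0 hpi1 hpi2.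
rewrite !MBE_path.
apply: le_trans (centered_sum_le (p_ge0 _ hpi1) (p_ge0 _ hpi2) same_mass h_bound) _.
apply: le_trans (ler_wpM2l _ (path_prob_l1_le x0)) _; first by rewrite divr_ge0.
rewrite (_ : _ / 2 * _ = n%:R * Hbar Bstar * dTV_pol pi1 pi2); last by field.
by rewrite ler_wpM2r // ler_wpM2r // ler_nat.
Qed.

End PathLaw.

Section BigDerivatives.
Variables (R : realType) (V : normedModType R) (J : Type) (r : seq J).

Lemma differentiable_sum_seq (F : J -> V -> R) x :
  (forall j, differentiable (F j) x) ->
  differentiable (fun y => \sum_(j <- r) F j y) x.
Proof.
move=> dF; elim: r => [|j r' IH].
  under eq_fun => y do rewrite big_nil; exact: differentiable_cst.
have -> : (fun y => \sum_(i <- j :: r') F i y) = F j + (fun y => \sum_(i <- r') F i y).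
  by apply/funext => y; rewrite big_cons.
exact: differentiableD.
Qed.

Lemma differentiable_prod_seq (F : J -> V -> R) x :
  (forall j, differentiable (F j) x) ->
  differentiable (fun y => \prod_(j <- r) F j y) x.
Proof.
move=> dF; elim: r => [|j r' IH].
  under eq_fun => y do rewrite big_nil; exact: differentiable_cst.
have -> : (fun y => \prod_(i <- j :: r') F i y) = F j * (fun y => \prod_(i <- r') F i y).
  by apply/funext => y; rewrite big_cons.
exact: differentiableM.
Qed.

Lemma is_derive_sum_seq (F : J -> V -> R) (dF : J -> R) x v :
  (forall j, is_derive x v (F j) (dF j)) ->
  is_derive x v (fun y => \sum_(j <- r) F j y) (\sum_(j <- r) dF j).
Proof.
move=> hF; elim: r => [|j r' IH].
  rewrite big_nil; under eq_fun => y do rewrite big_nil; exact: is_derive_cst.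
have -> : (fun y => \sum_(i <- j :: r') F i y) = F j + (fun y => \sum_(i <- r') F i y).
  by apply/funext => y; rewrite big_cons.
by rewrite big_cons; exact: is_deriveD.
Qed.

Lemma is_derive_prod_seq (F : J -> V -> R) (dF : J -> R) x v :
  (forall j, is_derive x v (F j) (dF j)) -> (forall j, F j x != 0) ->
  is_derive x v (fun y => \prod_(j <- r) F j y)
    ((\prod_(j <- r) F j x) * \sum_(j <- r) dF j / F j x).
Proof.
move=> hF Fx0; elim: r => [|j r' IH].
  rewrite !big_nil mulr0; under eq_fun => y do rewrite big_nil; exact: is_derive_cst.
have -> : (fun y => \prod_(i <- j :: r') F i y) = F j * (fun y => \prod_(i <- r') F i y).
  by apply/funext => y; rewrite big_cons.
apply: is_derive_eq; rewrite !big_cons /GRing.scale /=.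
by field; apply: Fx0.
Qed.

End BigDerivatives.

Lemma derive_ln (R : realType) (V : normedModType R) (f : V -> R) x v :
  differentiable f x -> 0 < f x -> 'D_v (fun y => ln (f y)) x = 'D_v f x / f x.
Proof.
move=> df fx0.
have is_ln := is_derive1_ln fx0.
have dln : differentiable (@ln R) (f x).
  by apply/derivable1_diffP; exact: (@ex_derive _ _ _ _ _ _ _ is_ln).
rewrite (_ : (fun y => ln (f y)) = (@ln R) \o f) // deriveE; last exact: differentiable_comp.
rewrite diff_comp //= -(deriveE _ df).
have -> : 'd (@ln R) (f x) ('D_v f x) = 'D_v f x *: 'd (@ln R) (f x) 1.
  by rewrite -linearZ /= /GRing.scale /= mulr1.
by rewrite -(deriveE _ dln) (@derive_val _ _ _ _ _ _ _ is_ln).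
Qed.

Section PolicyGradient.
Variables (R : realType) (S A O : finType) (n : nat).
Variables (mu : S -> R) (P : S -> A -> S -> R) (Ob : S -> O -> R).
Variables (I : Type) (info : 'I_n -> {ffun 'I_n.+1 -> O} -> {ffun 'I_n -> A} -> I).
Variable bel : 'I_n.+1 -> {ffun 'I_n.+1 -> O} -> {ffun 'I_n -> A} -> {ffun S -> R}.
Notation states := {ffun 'I_n.+1 -> S}.
Notation obss := {ffun 'I_n.+1 -> O}.
Notation acts := {ffun 'I_n -> A}.

Definition env_weight (ss : states) (os : obss) (as_ : acts) : R :=
  mu (ss ord0) * (\prod_(t < n.+1) Ob (ss t) (os t)) *
  \prod_(t < n) P (ss (tcur t)) (as_ t) (ss (tnext t)).

Definition policy_weight (pi : I -> A -> R) (os : obss) (as_ : acts) : R :=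
  \prod_(t < n) pi (info t os as_) (as_ t).

Lemma traj_prob_env pi ss os as_ :
  traj_prob mu P Ob info pi ss os as_ = env_weight ss os as_ * policy_weight pi os as_.
Proof. by rewrite /traj_prob big_split /= /env_weight /policy_weight; ring. Qed.

Variables (k : nat) (pi : 'rV[R]_k -> I -> A -> R) (theta : 'rV[R]_k).
Hypothesis hpi : forall i a, differentiable (fun th => pi th i a) theta /\ 0 < pi theta i a.

Lemma MBE_env :
  (fun th => MBE mu P Ob info bel (pi th)) =
  (fun th => \sum_(ss : states) \sum_(os : obss) \sum_(as_ : acts)
     env_weight ss os as_ * policy_weight (pi th) os as_ * Hbar (bel_traj bel os as_)).
Proof.
apply/funext => th; apply: eq_bigr => ss _; apply: eq_bigr => os _.
by apply: eq_bigr => as_ _; rewrite traj_prob_env.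
Qed.

Lemma env_summandE ss os as_ :
  (fun th => env_weight ss os as_ * policy_weight (pi th) os as_ * Hbar (bel_traj bel os as_)) =
  cst (env_weight ss os as_) * (fun th => policy_weight (pi th) os as_) *
  cst (Hbar (bel_traj bel os as_)).
Proof. exact/funext. Qed.

Definition score v (os : obss) (as_ : acts) : R :=
  \sum_(t < n) 'D_v (fun th => ln (pi th (info t os as_) (as_ t))) theta.

Lemma is_derive_policy_weight v os as_ :
  is_derive theta v (fun th => policy_weight (pi th) os as_)
    (policy_weight (pi theta) os as_ * score v os as_).
Proof.
rewrite /score (eq_bigr (fun t => 'D_v (fun th => pi th (info t os as_) (as_ t)) theta /
    pi theta (info t os as_) (as_ t))); last first.
  by move=> t _; have [df pos] := hpi (info t os as_) (as_ t); apply: derive_ln.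
apply: is_derive_prod_seq => t; last exact: lt0r_neq0 (proj2 (hpi _ _)).
exact/derivableP/diff_derivable/(proj1 (hpi _ _)).
Qed.

Lemma differentiable_MBE : differentiable (fun th => MBE mu P Ob info bel (pi th)) theta.
Proof.
rewrite MBE_env; apply: differentiable_sum_seq => ss; apply: differentiable_sum_seq => os.
apply: differentiable_sum_seq => as_; rewrite env_summandE.
apply: differentiableM; last exact: differentiable_cst.
apply: differentiableM; first exact: differentiable_cst.
by apply: differentiable_prod_seq => t; case: (hpi (info t os as_) (as_ t)).
Qed.

Lemma is_derive_MBE v :
  is_derive theta v (fun th => MBE mu P Ob info bel (pi th))
    (\sum_(ss : states) \sum_(os : obss) \sum_(as_ : acts) env_weight ss os as_ *
       (policy_weight (pi theta) os as_ * score v os as_) * Hbar (bel_traj bel os as_)).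
Proof.
rewrite MBE_env; apply: is_derive_sum_seq => ss; apply: is_derive_sum_seq => os.
apply: is_derive_sum_seq => as_; rewrite env_summandE.
have := is_derive_policy_weight v os as_ => ?.
by apply: is_derive_eq; rewrite /GRing.scale /=; ring.
Qed.

Lemma derive_MBE v :
  'D_v (fun th => MBE mu P Ob info bel (pi th)) theta =
  \sum_(ss : states) \sum_(os : obss) \sum_(as_ : acts)
    traj_prob mu P Ob info (pi theta) ss os as_ *
    \sum_(st : states) believed_prob (bel_traj bel os as_) st *
      ((\sum_(t < n) 'D_v (fun th => ln (pi th (info t os as_) (as_ t))) theta)
       * entropy (@empirical R _ _ st)).
Proof.
rewrite (@derive_val _ _ _ _ _ _ _ (is_derive_MBE v)).
apply: eq_bigr => ss _; apply: eq_bigr => os _; apply: eq_bigr => as_ _.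
rewrite traj_prob_env /score; set sc := \sum_(t < n) _.
have -> : \sum_(st : states) believed_prob (bel_traj bel os as_) st * (sc * entropy (@empirical R _ _ st)) =
          sc * Hbar (bel_traj bel os as_).
  by rewrite /Hbar mulr_sumr; apply: eq_bigr => st _; ring.
by ring.
Qed.

End PolicyGradient.

Theorem theorem3 (R : realType) (S A O : finType) (n : nat)
  (mu : S -> R) (P : S -> A -> S -> R) (Ob : S -> O -> R)
  (I : Type) (info : 'I_n -> {ffun 'I_n.+1 -> O} -> {ffun 'I_n -> A} -> I)
  (bel : 'I_n.+1 -> {ffun 'I_n.+1 -> O} -> {ffun 'I_n -> A} -> {ffun S -> R}) :
  is_dist mu ->
  (forall s a, is_dist (P s a)) ->
  (forall s, is_dist (Ob s)) ->
  causal_info info ->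
  causal_belief bel ->
  (forall t os as_, is_dist (bel t os as_)) ->
  (* (i) policy gradient *)
  (forall (k : nat) (Theta : set 'rV[R]_k) (pi : 'rV[R]_k -> I -> A -> R),
     open Theta ->
     (forall theta, Theta theta -> forall i, is_dist (pi theta i)) ->
     (forall theta, Theta theta -> forall i a,
        differentiable (fun th => pi th i a) theta /\ 0 < pi theta i a) ->
     forall theta, Theta theta ->
       differentiable (fun th => MBE mu P Ob info bel (pi th)) theta /\
       forall v : 'rV[R]_k,
         'D_v (fun th => MBE mu P Ob info bel (pi th)) theta =
         \sum_(ss : {ffun 'I_n.+1 -> S}) \sum_(os : {ffun 'I_n.+1 -> O})
         \sum_(as_ : {ffun 'I_n -> A})
           traj_prob mu P Ob info (pi theta) ss os as_ *
           \sum_(st : {ffun 'I_n.+1 -> S})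
             believed_prob (bel_traj bel os as_) st *
             ((\sum_(t < n) 'D_v (fun th => ln (pi th (info t os as_) (as_ t))) theta)
              * entropy (@empirical R _ _ st))) /\
  (* (ii) Lipschitz-type bound *)
  (forall (pi1 pi2 : I -> A -> R)
          (Bstar : {ffun 'I_n.+1 -> {ffun S -> R}}),
     (forall i, is_dist (pi1 i)) -> (forall i, is_dist (pi2 i)) ->
     TB mu P Ob info bel pi1 pi2 Bstar ->
     (forall B, TB mu P Ob info bel pi1 pi2 B -> Hbar B <= Hbar Bstar) ->
     `|MBE mu P Ob info bel pi1 - MBE mu P Ob info bel pi2|
       <= n.+1%:R * Hbar Bstar * dTV_pol pi1 pi2).
Proof.
move=> hmu hP hO info_causal _ hbel; split.
  move=> k Theta pi _ _ hpi theta /hpi hpi_theta.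
  by split; [exact: differentiable_MBE | exact: derive_MBE].
move=> pi1 pi2 Bstar hpi1 hpi2; exact: MBE_lipschitz.
Qed.
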